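(* For every $\lambda = ma+nb \in \Lambda^{2,2}_{+}$ (with $m,n\in\mathbb{N}$), the Frobenius complex $\mathcal{F}(\lambda;\Lambda^{2,2})$ is homotopy equivalent to the sphere $S^{m+n-2}$ (where $S^{-1}$ is the empty space).
   Context: $\mathbb{N}=\{0,1,2,\dots\}$. For an additive commutative monoid $\Lambda$ that is cancellative and has no non-trivial invertible elements, define the partial order $\lambda \le \mu$ iff there is $\nu\in\Lambda$ with $\lambda+\nu=\mu$; $\lambda<\mu$ means $\lambda\le\mu$ and $\lambda\neq\mu$. Let $\Lambda_+=\Lambda\setminus\{0\}$. For a poset $P$, $|P|$ denotes the geometric realization of its order complex, and $(x,y)_P=\{z\in P: x<z<y\}$. The Frobenius complex is $\mathcal{F}(\lambda;\Lambda)=|(0,\lambda)_\Lambda|$ for $\lambda\in\Lambda_+$. $\Lambda^{2,2}=\langle a,b\mid 2a=2b\rangle$ is the quotient of the free commutative monoid $\mathbb{N}a\oplus\mathbb{N}b$ by the congruence generated by $\lambda+2a\sim\lambda+2b$ ($\lambda\in\mathbb{N}a\oplus\mathbb{N}b$). *)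

From HB Require Import structures.
From Stdlib Require Import Relation_Operators.
From mathcomp Require Import all_boot all_order all_algebra generic_quotient.
From mathcomp Require Import all_classical all_reals all_analysis.
Set Implicit Arguments. Unset Strict Implicit. Unset Printing Implicit Defensive.
Import Order.TTheory GRing.Theory Num.Theory.
Import numFieldNormedType.Exports.
Local Open Scope classical_set_scope.
Local Open Scope ring_scope.
Local Open Scope quotient_scope.

(* Elements of the free commutative monoid N a (+) N b are pairs (m, n) = m a + n b. *)
Definition addp (x y : nat * nat) : nat * nat := ((x.1 + y.1)%N, (x.2 + y.2)%N).

Inductive gen22 : nat * nat -> nat * nat -> Prop :=
  | gen22_step (l : nat * nat) : gen22 (addp l (2%N, 0%N)) (addp l (0%N, 2%N)).

(* the congruence generated: the generating relation is translation invariant,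
   so its reflexive-symmetric-transitive closure is the generated congruence *)
Definition cong22 : nat * nat -> nat * nat -> Prop :=
  clos_refl_sym_trans (nat * nat) gen22.

Definition cong22b (x y : nat * nat) : bool := `[< cong22 x y >].

Lemma cong22b_refl : reflexive cong22b.
Proof. by move=> x; apply/asboolP; apply: rst_refl. Qed.
Lemma cong22b_sym : symmetric cong22b.
Proof.
by move=> x y; apply/asboolP/asboolP => H; apply: rst_sym.
Qed.
Lemma cong22b_trans : transitive cong22b.
Proof.
move=> y x z /asboolP Hxy /asboolP Hyz; apply/asboolP.
exact: rst_trans Hxy Hyz.
Qed.

Definition cong22_rel := EquivRel cong22b cong22b_refl cong22b_sym cong22b_trans.

Definition L22 := {eq_quot cong22_rel}.


Definition mkL (m n : nat) : L22 := \pi_L22 (m, n).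
Definition L0 : L22 := mkL 0 0.
Definition addL (x y : L22) : L22 := \pi_L22 (addp (repr x) (repr y)).

Definition leL (x y : L22) : Prop := exists nu, addL x nu = y.
Definition ltL (x y : L22) : Prop := leL x y /\ x <> y.

(* A point of |P| is a function t : V -> R, nonnegative, whose support is a
   finite chain of P, with total weight 1 (barycentric coordinates).  The
   space carries the (subspace of the) product topology on V -> R; for a
   finite poset, as here, this is the topology of the geometric realization. *)
Definition order_complex_realization (R : realType) (V : eqType)
  (le : V -> V -> Prop) (P : set V) : set {ptws V -> R} :=
  [set t : {ptws V -> R} |
    (forall v, 0 <= t v) /\
    exists s : seq V, [/\ uniq s,
      (forall v, t v != 0 <-> v \in s),
      (forall v, v \in s -> P v),
      (forall v w, v \in s -> w \in s -> le v w \/ le w v) &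
      \sum_(v <- s) t v = 1]].

Definition open_intervalL (x y : L22) : set L22 := [set z | ltL x z /\ ltL z y].

Definition frobenius_complex22 (R : realType) (lam : L22) : set {ptws L22 -> R} :=
  @order_complex_realization R _ leL (open_intervalL L0 lam).

(* unit sphere in R^d, i.e. S^(d-1); for d = 0 it is empty (= S^-1) *)
Definition unit_sphere (R : realType) (d : nat) : set 'rV[R]_d :=
  [set x | \sum_(i < d) (x ord0 i) ^+ 2 = 1].

Definition homotopic_in (R : realType) (X : topologicalType) (A : set X)
  (h k : X -> X) : Prop :=
  exists H : (R * X)%type -> X,
    [/\ {within `[0%R, 1%R] `*` A, continuous H},
        H @` (`[0%R, 1%R] `*` A) `<=` A &
        forall x, A x -> H (0%R, x) = h x /\ H (1%R, x) = k x].

Definition homotopy_equivalent (R : realType) (X Y : topologicalType)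
  (A : set X) (B : set Y) : Prop :=
  exists (f : X -> Y) (g : Y -> X),
    [/\ {within A, continuous f}, f @` A `<=` B,
        {within B, continuous g}, g @` B `<=` A &
      ( 
        @homotopic_in R X A (g \o f) idfun /\
        @homotopic_in R Y B (f \o g) idfun)].

(* An element of Lambda^{2,2} is determined by its degree m + n and the parity
   of n, and lambda < mu exactly when deg lambda < deg mu.  Hence the open
   interval (0, ma + nb) consists, for each degree 1 <= k <= d := m + n - 1, of
   two incomparable elements a_k, b_k, and elements of distinct degrees are
   comparable: the order complex is the d-fold join of S^0, i.e. the boundary
   of the d-dimensional cross-polytope.  Radial projection
   t |-> (t a_k - t b_k)_k / ||.||_2 is a homeomorphism onto S^(d-1); its
   inverse sends y to the positive and negative parts of the y_k divided by
   ||y||_1. *)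

From Stdlib Require Import Relation_Operators.
From mathcomp Require Import all_boot all_order all_algebra generic_quotient.
From mathcomp Require Import all_classical all_reals all_analysis.
From mathcomp Require Import zify ring lra.
Import numFieldNormedType.Exports.
Set Implicit Arguments. Unset Strict Implicit. Unset Printing Implicit Defensive.
Import Order.TTheory GRing.Theory Num.Theory.
Local Open Scope classical_set_scope.
Local Open Scope quotient_scope.

(** * The monoid Lambda^{2,2} *)

Definition class22 (p : nat * nat) : nat * bool := ((p.1 + p.2)%N, odd p.2).

Lemma class22_cong p q : cong22 p q -> class22 p = class22 q.
Proof.
elim=> {p q} [p q [l]|p|p q _ ->|p q r _ -> _ ->] //.
rewrite /class22 /addp /=; congr pair; first lia.
by rewrite !oddD.
Qed.

Lemma cong22_shift m n : cong22 (m, n.+2) (m.+2, n).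
Proof.
apply/rst_sym/rst_step.
by have := gen22_step (m, n); rewrite /addp /= !addn2 !addn0.
Qed.

Definition normal22 (c : nat * bool) : nat * nat :=
  if c.2 then (c.1.-1, 1%N) else (c.1, 0%N).

Lemma cong22_normal22 p : cong22 p (normal22 (class22 p)).
Proof.
case: p => m n; elim/ltn_ind: n m => -[|[|n]] IH m.
- by rewrite /normal22 /class22 /= addn0; apply: rst_refl.
- by rewrite /normal22 /class22 /= addn1; apply: rst_refl.
apply: rst_trans (cong22_shift m n) _.
have -> : class22 (m, n.+2) = class22 (m.+2, n) by rewrite /class22 /=; congr pair; lia.
exact: IH.
Qed.

Lemma cong22P p q : cong22 p q <-> class22 p = class22 q.
Proof.
split=> [|e]; first exact: class22_cong.
apply: rst_trans (cong22_normal22 p) _; rewrite e.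
exact/rst_sym/cong22_normal22.
Qed.

Definition classL (x : L22) := class22 (repr x).
Definition degL (x : L22) := (classL x).1.
Definition parL (x : L22) := (classL x).2.

Lemma classL_pi p : classL (\pi_L22 p) = class22 p.
Proof.
apply/cong22P; have : \pi_L22 (repr (\pi_L22 p)) = \pi_L22 p by rewrite reprK.
by move/eqmodP => /asboolP.
Qed.

Lemma degL_parL_inj x y : degL x = degL y -> parL x = parL y -> x = y.
Proof.
rewrite /degL /parL => e1 e2.
rewrite -[x]reprK -[y]reprK; apply/eqmodP/asboolP/cong22P.
by move: e1 e2; rewrite /classL; case: (class22 _) (class22 _) => [? ?] [? ?] /= -> ->.
Qed.

Lemma degL_add x y : degL (addL x y) = (degL x + degL y)%N.
Proof. by rewrite /degL /addL classL_pi /classL /class22 /addp /=; lia. Qed.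

Lemma parL_add x y : parL (addL x y) = parL x (+) parL y.
Proof. by rewrite /parL /addL classL_pi /classL /= oddD. Qed.

Lemma degL_mkL m n : degL (mkL m n) = (m + n)%N.
Proof. by rewrite /degL /mkL classL_pi. Qed.

Lemma parL_mkL m n : parL (mkL m n) = odd n.
Proof. by rewrite /parL /mkL classL_pi. Qed.

Lemma degL0_L0 x : degL x = 0%N -> x = L0.
Proof.
move=> x0; apply: degL_parL_inj; rewrite /L0 ?degL_mkL // parL_mkL.
by move: x0; rewrite /degL /parL /classL /class22; case: (repr x) => a [|b] /=; lia.
Qed.

Lemma leLP x y : leL x y <-> (degL x < degL y)%N \/ x = y.
Proof.
split=> [[nu <-]|[xy|->]].
- rewrite degL_add; have [nu0|nu_gt0] := posnP (degL nu); last by left; lia.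
  right; rewrite (degL0_L0 nu0); apply: degL_parL_inj; first by rewrite degL_add /L0 degL_mkL !addn0.
  by rewrite parL_add /L0 parL_mkL addbF.
- pose b := parL x != parL y.
  exists (mkL (degL y - degL x - b) b); apply: degL_parL_inj.
    by rewrite degL_add degL_mkL /b; case: (_ != _); lia.
  by rewrite parL_add parL_mkL /b; case: (parL x); case: (parL y).
- exists L0; apply: degL_parL_inj; rewrite /L0.
    by rewrite degL_add degL_mkL !addn0.
  by rewrite parL_add parL_mkL addbF.
Qed.

Lemma ltLP x y : ltL x y <-> (degL x < degL y)%N.
Proof.
split=> [[/leLP [//|->]] //|xy].
by split=> [|e]; [apply/leLP; left | rewrite e ltnn in xy].
Qed.

(* [node (k-1) false] = k a and [node (k-1) true] = (k-1) a + b are the two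
   elements of degree k. *)
Definition node (j : nat) (b : bool) : L22 := \pi_L22 ((j.+1 - b)%N, nat_of_bool b).

Lemma degL_node j b : degL (node j b) = j.+1.
Proof. by rewrite /degL /node classL_pi /=; case: b => /=; lia. Qed.

Lemma parL_node j b : parL (node j b) = b.
Proof. by rewrite /parL /node classL_pi /=; case: b. Qed.

Lemma node_degL x : (0 < degL x)%N -> x = node (degL x).-1 (parL x).
Proof. by move=> x_gt0; apply: degL_parL_inj; rewrite ?degL_node ?parL_node //; lia. Qed.

Lemma node_inj j b j' b' : node j b = node j' b' -> j = j' /\ b = b'.
Proof.
move=> e; split; first by have := degL_node j b; rewrite e degL_node => -[].
by have := parL_node j b; rewrite e parL_node.
Qed.

Section Nodes.
Variable d : nat.
Local Open Scope ring_scope.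

Definition nodes : seq L22 :=
  [seq node j false | j : 'I_d <- index_enum 'I_d] ++
  [seq node j true | j : 'I_d <- index_enum 'I_d].

Lemma big_nodes (R : nmodType) (F : L22 -> R) :
  \sum_(v <- nodes) F v = \sum_(j < d) (F (node j false) + F (node j true)).
Proof. by rewrite big_cat !big_map big_split. Qed.

Lemma mem_nodes (j : 'I_d) b : node j b \in nodes.
Proof.
by rewrite mem_cat; case: b; apply/orP; [right|left]; apply/mapP; exists j; rewrite ?mem_index_enum.
Qed.

Lemma nodesP v : v \in nodes -> exists (j : 'I_d) b, v = node j b.
Proof. by rewrite mem_cat => /orP[] /mapP [j _ ->]; exists j; eexists. Qed.

Lemma uniq_nodes : uniq nodes.
Proof.
have node_ord_inj b : injective (fun j : 'I_d => node j b).
  by move=> i j /node_inj [/val_inj].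
rewrite cat_uniq !map_inj_uniq ?index_enum_uniq //= andbT.
by apply/hasPn => _ /mapP [j _ ->]; apply/mapP => -[i _ /node_inj []].
Qed.

End Nodes.

(** * The Frobenius complex as a subset of the cross-polytope *)

Section FrobeniusComplex.
Variables (R : realType) (m n : nat).
Local Notation d := (m + n).-1.
Local Notation frob := (@frobenius_complex22 R (mkL m n)).
Local Open Scope ring_scope.

Lemma open_interval_nodes v : open_intervalL L0 (mkL m n) v -> v \in nodes d.
Proof.
case=> /ltLP v_gt0 /ltLP v_lt; rewrite /L0 degL_mkL in v_gt0; rewrite degL_mkL in v_lt.
rewrite (node_degL v_gt0); have j_lt : ((degL v).-1 < d)%N by lia.
exact: (mem_nodes (Ordinal j_lt)).
Qed.

Lemma node_open_interval (j : 'I_d) b : open_intervalL L0 (mkL m n) (node j b).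
Proof. by split; apply/ltLP; rewrite degL_node /L0 degL_mkL //; have := ltn_ord j; lia. Qed.

Variable t : {ptws L22 -> R}.
Hypothesis frob_t : frob t.

Lemma frob_ge0 v : 0 <= t v.
Proof. by case: frob_t. Qed.

Lemma frob_eq0 v : v \notin nodes d -> t v = 0.
Proof.
case: frob_t => _ [s [_ supp inP _ _]] v_out; apply/eqP; apply: contraNT v_out.
by move/supp/inP; apply: open_interval_nodes.
Qed.

(* a_j and b_j are incomparable, so a chain contains at most one of them *)
Lemma frob_node_eq0 (j : 'I_d) : t (node j false) = 0 \/ t (node j true) = 0.
Proof.
case: frob_t => _ [s [_ supp _ chain _]].
have [|/supp tj1] := eqVneq (t (node j false)) 0; first by left.
have [|/supp tj2] := eqVneq (t (node j true)) 0; first by right.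
by case: (chain _ _ tj1 tj2) => /leLP; rewrite !degL_node ltnn => -[//|/node_inj []].
Qed.

Lemma frob_sum : \sum_(v <- nodes d) t v = 1.
Proof.
case: frob_t => _ [s [uniq_s supp inP _ <-]].
have s_nodes : {subset s <= nodes d} by move=> v /inP /open_interval_nodes.
have perm_s : perm_eq (nodes d) (s ++ [seq v <- nodes d | v \notin s]).
  apply: uniq_perm; first exact: uniq_nodes.
    rewrite cat_uniq uniq_s filter_uniq ?uniq_nodes //= andbT.
    by apply/hasPn => v; rewrite mem_filter => /andP[].
  move=> v; rewrite mem_cat mem_filter.
  by case: (boolP (v \in s)) => [/s_nodes ->|].
rewrite (perm_big _ perm_s) big_cat /= [X in _ + X]big1_seq ?addr0 //.
move=> v /andP[_]; rewrite mem_filter => /andP[v_out _].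
by apply/eqP; apply: contraNT v_out => /supp.
Qed.

End FrobeniusComplex.

(** * Radial projection onto the sphere *)

Section Continuity.
Variable R : realType.
Local Open Scope ring_scope.

Lemma ptws_continuous_at (Y : topologicalType) (V : Type) (h : Y -> {ptws V -> R}) y :
  (forall v, {for y, continuous (fun z => h z v)}) -> {for y, continuous h}.
Proof.
move=> hc; apply/cvg_sup => v A /=; rewrite nbhsE /= => -[B [[C Cop CB] By] sBA].
have /hc : nbhs (h y v) C by apply: open_nbhs_nbhs; split => //; move: By; rewrite -CB.
rewrite nbhs_simpl /= nbhsE => -[D Dy sD].
by exists D => // z /sD Cz; apply: sBA; rewrite -CB.
Qed.

Lemma mx_continuous_at (X : topologicalType) p q (h : X -> 'M[R]_(p, q)) x :
  (forall i j, {for x, continuous (fun z => h z i j)}) -> {for x, continuous h}.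
Proof.
move=> hc A /= [P Pn sPA]; apply: (filterS (fun z hz => sPA (h z) hz)).
apply: filter_forall => i; apply: filter_forall => j.
exact: hc i j (P i j) (Pn i j).
Qed.

Lemma sum_continuous_at (T : topologicalType) (I : Type) (r : seq I) (P : pred I)
    (f : I -> T -> R) x :
  (forall i, {for x, continuous (f i)}) ->
  {for x, continuous (fun z => \sum_(i <- r | P i) f i z)}.
Proof. by move=> fc; apply: (@cvg_big _ _ +%R 0 P add_continuous) => // i _; apply: fc. Qed.

End Continuity.

Section PosNegParts.
Variable R : realType.
Implicit Types a c p q : R.
Local Open Scope ring_scope.

Definition pospart a := (a + `|a|) / 2.
Definition negpart a := (`|a| - a) / 2.

Lemma pospart_ge0 a : 0 <= pospart a.
Proof. by rewrite /pospart; case: (lerP 0 a) => a0; [rewrite ger0_norm|rewrite ltr0_norm]; lra. Qed.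

Lemma negpart_ge0 a : 0 <= negpart a.
Proof. by rewrite /negpart; case: (lerP 0 a) => a0; [rewrite ger0_norm|rewrite ltr0_norm]; lra. Qed.

Lemma pospart_add_negpart a : pospart a + negpart a = `|a|.
Proof. by rewrite /pospart /negpart; lra. Qed.

Lemma pospart_sub_negpart a : pospart a - negpart a = a.
Proof. by rewrite /pospart /negpart; lra. Qed.

Lemma pospart_negpart_eq0 a : pospart a = 0 \/ negpart a = 0.
Proof.
rewrite /pospart /negpart.
by case: (lerP 0 a) => a0; [rewrite ger0_norm // ; right|rewrite ltr0_norm //; left]; lra.
Qed.

Lemma pospartZ c a : 0 <= c -> pospart (c * a) = c * pospart a.
Proof. by move=> c0; rewrite /pospart normrM ger0_norm //; ring. Qed.

Lemma negpartZ c a : 0 <= c -> negpart (c * a) = c * negpart a.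
Proof. by move=> c0; rewrite /negpart normrM ger0_norm //; ring. Qed.

Lemma pospart_negpart_sub p q : 0 <= p -> 0 <= q -> p = 0 \/ q = 0 ->
  pospart (p - q) = p /\ negpart (p - q) = q.
Proof.
by move=> p0 q0 [->|->]; rewrite /pospart /negpart ?sub0r ?subr0 ?normrN ger0_norm //; split; lra.
Qed.

Lemma pospart_continuous : continuous pospart.
Proof.
move=> a; apply: (@continuousM _ _ (fun x => _) (fun=> _)); last exact: cvg_cst.
by apply: continuousD; [exact: cvg_id | exact: norm_continuous].
Qed.

Lemma negpart_continuous : continuous negpart.
Proof.
move=> a; apply: (@continuousM _ _ (fun x => _) (fun=> _)); last exact: cvg_cst.
by apply: continuousB; [exact: norm_continuous | exact: cvg_id].
Qed.

End PosNegParts.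

Section CrossPolytope.
Variables (R : realType) (d : nat).
Implicit Types (y : 'rV[R]_d) (t : {ptws L22 -> R}).
Local Open Scope ring_scope.

Definition ssq y := \sum_(j < d) y ord0 j ^+ 2.
Definition l1 y := \sum_(j < d) `|y ord0 j|.

Lemma ssq_ge0 y : 0 <= ssq y.
Proof. by apply: sumr_ge0 => j _; apply: sqr_ge0. Qed.

Lemma l1_ge0 y : 0 <= l1 y.
Proof. by apply: sumr_ge0 => j _. Qed.

Lemma ssq_eq0 y : (ssq y == 0) = (y == 0).
Proof.
apply/eqP/eqP => [y0|->]; last by rewrite /ssq big1 // => j _; rewrite mxE expr0n.
apply/rowP => j; rewrite mxE.
by apply/eqP; rewrite -sqrf_eq0; apply/eqP/(psumr_eq0P _ y0) => // i _; apply: sqr_ge0.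
Qed.

Lemma l1_eq0 y : (l1 y == 0) = (y == 0).
Proof.
apply/eqP/eqP => [y0|->]; last by rewrite /l1 big1 // => j _; rewrite mxE normr0.
apply/rowP => j; rewrite mxE.
by apply/eqP; rewrite -normr_eq0; apply/eqP/(psumr_eq0P _ y0).
Qed.

Lemma ssq_gt0 y : (0 < ssq y) = (y != 0).
Proof. by rewrite lt0r ssq_eq0 ssq_ge0 andbT. Qed.

Lemma l1_gt0 y : (0 < l1 y) = (y != 0).
Proof. by rewrite lt0r l1_eq0 l1_ge0 andbT. Qed.

Lemma ssqZ c y : ssq (c *: y) = c ^+ 2 * ssq y.
Proof. by rewrite /ssq mulr_sumr; apply: eq_bigr => j _; rewrite mxE exprMn. Qed.

Lemma l1Z c y : l1 (c *: y) = `|c| * l1 y.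
Proof. by rewrite /l1 mulr_sumr; apply: eq_bigr => j _; rewrite mxE normrM. Qed.

Definition node_diff t : 'rV[R]_d := \row_(j < d) (t (node j false) - t (node j true)).

Definition to_sphere t : 'rV[R]_d := (Num.sqrt (ssq (node_diff t)))^-1 *: node_diff t.

(* Written with indicator coefficients so that each coordinate is visibly
   continuous in y. *)
Definition of_sphere y : {ptws L22 -> R} := fun v =>
  (\sum_(j < d) ((v == node j false)%:R * pospart (y ord0 j)
                 + (v == node j true)%:R * negpart (y ord0 j))) / l1 y.

Lemma of_sphere_node y (j : 'I_d) b :
  of_sphere y (node j b) = (if b then negpart (y ord0 j) else pospart (y ord0 j)) / l1 y.
Proof.
rewrite /of_sphere (bigD1 j) //= big1 ?addr0 => [|i ij].
  by case: b; rewrite !eqxx; case: eqP => [/node_inj[]//|_]; rewrite /= ?mul0r ?mul1r ?add0r ?addr0.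
have node_neq c : (node j b == node i c) = false.
  by apply/eqP => /node_inj [/val_inj/eqP]; rewrite eq_sym (negbTE ij).
by rewrite !node_neq !mul0r addr0.
Qed.

Lemma of_sphere_out y v : v \notin nodes d -> of_sphere y v = 0.
Proof.
move=> v_out; rewrite /of_sphere big1 ?mul0r // => j _.
have node_neq c : (v == node j c) = false.
  by apply/eqP => e; move: v_out; rewrite e mem_nodes.
by rewrite !node_neq !mul0r addr0.
Qed.

Lemma node_diff_continuous : continuous node_diff.
Proof.
move=> t; apply: mx_continuous_at => i j.
have -> : (fun z => node_diff z i j) = (fun z => z (node j false) - z (node j true)).
  by apply/funext => z; rewrite mxE.
by apply: continuousB; apply: (@proj_continuous L22 (fun _ => R)).
Qed.

Lemma to_sphere_continuous_at t : node_diff t != 0 -> {for t, continuous to_sphere}.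
Proof.
move=> diff_neq0; apply: continuousZ; last exact: node_diff_continuous.
apply: continuousV; first by rewrite sqrtr_eq0 -ltNge ssq_gt0.
apply: (continuous_comp _ (@sqrt_continuous R _)).
apply: sum_continuous_at => j.
apply: (@continuous_comp _ _ _ (fun z => node_diff z ord0 j) (fun a : R => a ^+ 2)).
  apply: (continuous_comp (f := node_diff) (g := fun M : 'rV[R]_d => M ord0 j)).
    exact: node_diff_continuous.
  exact: coord_continuous.
exact: (@exprn_continuous R 2).
Qed.

Lemma of_sphere_continuous_at y : y != 0 -> {for y, continuous of_sphere}.
Proof.
rewrite -l1_eq0 => l1_neq0; apply: ptws_continuous_at => v.
have coord_cont (f : R -> R) j : continuous f ->
    {for y, continuous (fun z : 'rV[R]_d => f (z ord0 j))}.
  move=> f_cont; apply: (continuous_comp (f := fun z : 'rV[R]_d => z ord0 j) (g := f)).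
    exact: coord_continuous.
  exact: f_cont.
apply: continuousM.
  apply: sum_continuous_at => j.
  by apply: continuousD; apply: continuousM;
    [ exact: cst_continuous | apply/coord_cont/pospart_continuous
    | exact: cst_continuous | apply/coord_cont/negpart_continuous].
apply: continuousV => //; apply: sum_continuous_at => j.
by apply: coord_cont; apply: (@norm_continuous _ R^o).
Qed.

End CrossPolytope.

Arguments of_sphere {R d} y.

Section Homeomorphism.
Variables (R : realType) (m n : nat).
Local Notation d := (m + n).-1.
Local Notation frob := (@frobenius_complex22 R (mkL m n)).
Local Notation sphere := (@unit_sphere R d).
Local Open Scope ring_scope.

Lemma l1_node_diff t : frob t -> l1 (node_diff d t) = 1.
Proof.
move=> frob_t; rewrite -(frob_sum frob_t) big_nodes; apply: eq_bigr => j _.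
rewrite mxE; have [-> | ->] := frob_node_eq0 frob_t j;
  by rewrite ?sub0r ?subr0 ?normrN ger0_norm ?(frob_ge0 frob_t) ?add0r ?addr0.
Qed.

Lemma node_diff_neq0 t : frob t -> node_diff d t != 0.
Proof. by move=> frob_t; rewrite -l1_eq0 l1_node_diff // oner_neq0. Qed.

Lemma sphere_neq0 y : sphere y -> y != 0.
Proof.
move=> sph_y; have ssq_y : ssq y = 1 := sph_y.
by rewrite -ssq_eq0 ssq_y oner_neq0.
Qed.

Lemma to_sphere_in t : frob t -> sphere (to_sphere d t).
Proof.
move=> frob_t; rewrite /unit_sphere /= -/(ssq _) /to_sphere ssqZ exprVn.
have ssq_pos : 0 < ssq (node_diff d t) by rewrite ssq_gt0 node_diff_neq0.
by rewrite sqr_sqrtr ?(ltW ssq_pos) // mulVf // gt_eqF.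
Qed.

Lemma of_sphere_in y : sphere y -> frob (of_sphere y).
Proof.
move=> sph_y; have l1_pos : 0 < l1 y by rewrite l1_gt0 sphere_neq0.
split=> [v|].
  rewrite /of_sphere divr_ge0 ?(ltW l1_pos) //; apply: sumr_ge0 => j _.
  by rewrite addr_ge0 // mulr_ge0 ?ler0n ?pospart_ge0 ?negpart_ge0.
exists [seq v <- nodes d | of_sphere y v != 0]; split.
- by rewrite filter_uniq // uniq_nodes.
- move=> v; rewrite mem_filter; split=> [yv_neq0|/andP[] //].
  by rewrite yv_neq0; apply: contraNT yv_neq0 => /of_sphere_out ->.
- by move=> v; rewrite mem_filter => /andP [_ /nodesP [j [b ->]]]; apply: node_open_interval.
- move=> v w; rewrite !mem_filter => /andP [yv /nodesP [j [b ?]]] /andP [yw /nodesP [i [c ?]]].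
  subst v w; case: (ltngtP j i) => [ji|ij|/val_inj ji].
  + by left; apply/leLP; left; rewrite !degL_node.
  + by right; apply/leLP; left; rewrite !degL_node.
  (* a point of the sphere has y_j <= 0 or y_j >= 0, so a_j and b_j are never both in the support *)
  rewrite -{}ji in yw *; have [->|bc] := eqVneq b c; first by left; apply/leLP; right.
  move: yv yw; rewrite !of_sphere_node.
  by case: (pospart_negpart_eq0 (y ord0 j)) => ->; move: bc; case: b; case: c;
    rewrite // mul0r eqxx.
- rewrite big_filter big_mkcond /=.
  rewrite (eq_bigr (of_sphere y)) => [|v _]; last by case: eqP.
  rewrite big_nodes; under eq_bigr do rewrite !of_sphere_node -mulrDl pospart_add_negpart.
  by rewrite -mulr_suml divff // gt_eqF.
Qed.

Lemma to_sphereK t : frob t -> of_sphere (to_sphere d t) = t.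
Proof.
move=> frob_t; apply/funext => v.
have ssq_pos : 0 < ssq (node_diff d t) by rewrite ssq_gt0 node_diff_neq0.
set c := (Num.sqrt (ssq (node_diff d t)))^-1.
have c_gt0 : 0 < c by rewrite invr_gt0 sqrtr_gt0.
have l1_to_sphere : l1 (to_sphere d t) = c by rewrite l1Z l1_node_diff // mulr1 gtr0_norm.
have [/nodesP [j [b ->]]|v_out] := boolP (v \in nodes d); last first.
  by rewrite of_sphere_out // (frob_eq0 frob_t).
rewrite of_sphere_node l1_to_sphere /to_sphere mxE [node_diff _ _ _ _]mxE.
have [pos_eq neg_eq] := pospart_negpart_sub (frob_ge0 frob_t (node j false))
  (frob_ge0 frob_t (node j true)) (frob_node_eq0 frob_t j).
by case: b; rewrite ?negpartZ ?pospartZ ?(ltW c_gt0) // ?pos_eq ?neg_eq mulrC mulKf // gt_eqF.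
Qed.

Lemma of_sphereK y : sphere y -> to_sphere d (of_sphere y) = y.
Proof.
move=> sph_y; have ssq_y : ssq y = 1 := sph_y.
have l1_pos : 0 < l1 y by rewrite l1_gt0 sphere_neq0.
rewrite /to_sphere; have -> : node_diff d (of_sphere y) = (l1 y)^-1 *: y.
  by apply/rowP => j; rewrite !mxE !of_sphere_node -mulrBl pospart_sub_negpart mulrC.
rewrite ssqZ ssq_y mulr1 sqrtr_sqr gtr0_norm ?invr_gt0 //.
by rewrite scalerA mulVf ?scale1r // invr_eq0 gt_eqF.
Qed.

Lemma to_sphere_continuous : {within frob, continuous to_sphere d}.
Proof.
apply: continuous_in_subspaceT => t /set_mem frob_t.
exact/to_sphere_continuous_at/node_diff_neq0.
Qed.

Lemma of_sphere_continuous : {within sphere, continuous of_sphere}.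
Proof.
apply: continuous_in_subspaceT => y /set_mem sph_y.
exact/of_sphere_continuous_at/sphere_neq0.
Qed.

End Homeomorphism.

Lemma homotopic_in_refl (R : realType) (X : topologicalType) (A : set X) (h : X -> X) :
  (forall x, A x -> h x = x) -> homotopic_in R A h idfun.
Proof.
move=> hA; exists snd; split.
- by apply: continuous_subspaceT => p; apply: cvg_snd.
- by move=> _ [[s x] [_ Ax] <-].
- by move=> x Ax; rewrite hA.
Qed.

Lemma homeomorphic_homotopy_equivalent (R : realType) (X Y : topologicalType)
    (A : set X) (B : set Y) (f : X -> Y) (g : Y -> X) :
  {within A, continuous f} -> f @` A `<=` B ->
  {within B, continuous g} -> g @` B `<=` A ->
  (forall x, A x -> g (f x) = x) -> (forall y, B y -> f (g y) = y) ->
  homotopy_equivalent R A B.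
Proof.
move=> f_cont fAB g_cont gBA fK gK; exists f, g; split=> //.
by split; apply: homotopic_in_refl.
Qed.

Unset Implicit Arguments.

(* For lam = 0 (m = n = 0) both spaces are empty. *)
Theorem theorem2p8 (R : realType) (lam : L22) (m n : nat) :
  lam <> L0 -> lam = mkL m n ->
  @homotopy_equivalent R _ _ (@frobenius_complex22 R lam) (@unit_sphere R (m + n).-1).
Proof.
move=> _ ->; apply: (@homeomorphic_homotopy_equivalent R _ _ _ _ (to_sphere _) of_sphere).
- exact: to_sphere_continuous.
- by move=> _ [t frob_t <-]; apply: to_sphere_in.
- exact: of_sphere_continuous.
- by move=> _ [y sph_y <-]; apply: of_sphere_in.
- exact: to_sphereK.
- exact: of_sphereK.
Qed.
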